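(* Consider the Team Surviving Orienteers setting described in the context, with feasible path set $\mathcal{X}(p_s,\omega)$ and priorities $d_j>0$. Define the set function $J:2^{\mathcal{X}(p_s,\omega)}\to\mathbb{R}$ by $$J(X)=\sum_{j=1}^V d_j\,\mathbb{E}\Big[1-\prod_{\rho\in X}\big(1-z_j(\rho)\big)\Big]=\sum_{j=1}^V d_j\Big(1-\prod_{\rho\in X}\big(1-\mathbb{E}[z_j(\rho)]\big)\Big),$$ i.e. the weighted expected number of nodes visited by at least one robot when robots follow the paths in $X$. Then $J$ is normalized, non-negative, monotone and submodular.
   Context: Let $\mathcal{G}=(\mathcal{V},\mathcal{E})$ be a finite simple graph with node set $\mathcal{V}=\{1,\dots,V\}$ and edge weights $\omega:\mathcal{E}\to(0,1]$, where $\omega(e)$ is the probability of surviving traversal of edge $e$. A path $\rho$ is a sequence of nodes $\rho(0),\rho(1),\dots,\rho(\lvert\rho\rvert)$ with $(\rho(n-1),\rho(n))\in\mathcal{E}$ for each $n$; $\lvert\rho\rvert$ is its number of edges. For a path $\rho$, let $s_1(\rho),\dots,s_{\lvert\rho\rvert}(\rho)$ be independent Bernoulli random variables with $\mathbb{P}\{s_n(\rho)=1\}=\omega((\rho(n-1),\rho(n)))$, let $a_n(\rho)=\prod_{i=1}^n s_i(\rho)$, and for each node $j$ let $z_j(\rho)=\max_{n=1,\dots,\lvert\rho\rvert} a_n(\rho)\,\mathbb{I}\{\rho(n)=j\}$ (the indicator that a robot following $\rho$ reaches node $j$). Random variables associated with distinct paths are independent. Given a start node $v_s$, a terminal node $v_t$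 and $p_s\in(0,1]$, the feasible set $\mathcal{X}(p_s,\omega)$ is the (assumed nonempty) set of paths $\rho$ with $\rho(0)=v_s$, $\rho(\lvert\rho\rvert)=v_t$ and $\mathbb{P}\{a_{\lvert\rho\rvert}(\rho)=1\}\ge p_s$. Normalized means $J(\emptyset)=0$; monotone means $J(X)\le J(X')$ for $X\subseteq X'$; submodular means $J(X\cup\{\rho\})-J(X)\ge J(X'\cup\{\rho\})-J(X')$ for all $X\subseteq X'\subset\mathcal{X}(p_s,\omega)$ and $\rho\in\mathcal{X}(p_s,\omega)\setminus X'$. *)

From HB Require Import structures.
From mathcomp Require Import all_boot all_order all_algebra.
From mathcomp Require Import finmap.
Set Implicit Arguments. Unset Strict Implicit. Unset Printing Implicit Defensive.
Import Order.TTheory GRing.Theory Num.Theory.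
Local Open Scope ring_scope.
Local Open Scope fset_scope.

Section TSO.
Variables (R : realFieldType) (T : finType).

Definition simple_graph (e : rel T) : Prop :=
  symmetric e /\ irreflexive e.

Definition edge_weights (e : rel T) (w : T -> T -> R) : Prop :=
  forall u v, e u v -> 0 < w u v <= 1 /\ w u v = w v u.

Definition is_path (e : rel T) (rho : seq T) : bool :=
  if rho is x :: s then path e x s else false.

Definition plen (rho : seq T) : nat := (size rho).-1.

Definition node_is (rho : seq T) (n : nat) (j : T) : bool :=
  if rho is x :: _ then nth x rho n == j else false.

Variable w : T -> T -> R.

(* survival probability of the (i+1)-th edge (rho(i), rho(i+1)) *)
Definition wedge (rho : seq T) (i : nat) : R :=
  if rho is x :: _ then w (nth x rho i) (nth x rho i.+1) else 0.

(* Sample space for the survival variables s_1..s_|rho| of path rho: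
   outcomes b : {ffun 'I_|rho| -> bool}, b i = s_{i+1}. *)
Definition outcome (rho : seq T) := {ffun 'I_(plen rho) -> bool}.

Definition prob (rho : seq T) (b : outcome rho) : R :=
  \prod_(i < plen rho) (if b i then wedge rho i else 1 - wedge rho i).

Definition Expect (rho : seq T) (f : outcome rho -> bool) : R :=
  \sum_(b : outcome rho) prob b * (f b)%:R.

Definition a_var (rho : seq T) (n : nat) (b : outcome rho) : bool :=
  [forall k : 'I_(plen rho), (k < n)%N ==> b k].

(* z_j(rho) = max_{n=1..|rho|} a_n(rho) * I{rho(n) = j} *)
Definition z_var (rho : seq T) (j : T) (b : outcome rho) : bool :=
  [exists i : 'I_(plen rho), node_is rho i.+1 j && a_var i.+1 b].

Definition Ez (j : T) (rho : seq T) : R := Expect (z_var j (rho := rho)).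

Definition Psurv (rho : seq T) : R := Expect (a_var (plen rho) (rho := rho)).

Definition feasible (e : rel T) (vs vt : T) (ps : R) (rho : seq T) : bool :=
  [&& is_path e rho,
      (if rho is x :: s then (x == vs) && (last x s == vt) else false)
    & ps <= Psurv rho].

Definition J (d : T -> R) (X : {fset seq T}) : R :=
  \sum_(j : T) d j * (1 - \prod_(rho <- X) (1 - Ez j rho)).
End TSO.

(* For each node j and path rho, q rho j := 1 - E[z_j(rho)] lies in [0, 1],
   since E[z_j(rho)] is an expectation of an indicator under a product of
   Bernoulli laws whose parameters are edge weights.  J is then a weighted
   coverage function: adding rho outside X raises the j-th summand by
   d_j (1 - q rho j) \prod_(r <- X) q r j, which is nonnegative and shrinks as
   X grows, because a product of more factors in [0, 1] is smaller. *)
From HB Require Import structures.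
From mathcomp Require Import all_boot all_order all_algebra.
From mathcomp Require Import finmap.
From mathcomp Require Import ring.
Set Implicit Arguments. Unset Strict Implicit. Unset Printing Implicit Defensive.
Import Order.TTheory GRing.Theory Num.Theory.
Local Open Scope ring_scope.
Local Open Scope fset_scope.

Section Products01.
Variables (R : numDomainType) (K : choiceType) (F : K -> R).

Lemma prod_fset_01 (X : {fset K}) :
  {in X, forall k, 0 <= F k <= 1} -> 0 <= \prod_(k <- X) F k <= 1.
Proof.
move=> F01; rewrite big_seq_cond prodr_ile1 ?andbT; last first.
  by move=> k /andP[/F01].
by rewrite prodr_ge0 // => k /andP[/F01/andP[]].
Qed.

Lemma prod_fset_subset (X X' : {fset K}) :
  {in X', forall k, 0 <= F k <= 1} -> X `<=` X' ->
  \prod_(k <- X') F k <= \prod_(k <- X) F k.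
Proof.
move=> F01 sXX'.
have -> : \prod_(k <- X) F k = \prod_(k <- X') (if k \in X then F k else 1).
  rewrite -(big_fset_incl _ sXX') => [|k _ /negbTE -> //].
  by apply: eq_fbigr => k ->.
rewrite big_seq_cond [leRHS]big_seq_cond; apply: ler_prod => k /andP[kX' _].
by have /andP[F0 F1] := F01 k kX'; rewrite F0; case: ifP; rewrite ?lexx.
Qed.

End Products01.

Section Coverage.
Variables (R : numDomainType) (K : choiceType) (I : finType).
Variables (d : I -> R) (q : K -> I -> R) (S : pred K).
Hypothesis d_ge0 : forall j, 0 <= d j.
Hypothesis q01 : {in S, forall k j, 0 <= q k j <= 1}.

(* [q k j] is the probability that [k] misses [j]. *)
Definition coverage (X : {fset K}) : R :=
  \sum_(j : I) d j * (1 - \prod_(k <- X) q k j).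

Lemma coverage_fset0 : coverage fset0 = 0.
Proof. by apply: big1 => j _; rewrite big_seq_fset0 subrr mulr0. Qed.

Lemma coverage_ge0 (X : {fset K}) : {subset X <= S} -> 0 <= coverage X.
Proof.
move=> sXS; apply: sumr_ge0 => j _; rewrite mulr_ge0 // subr_ge0.
by have /andP[] := prod_fset_01 (fun k kX => q01 (sXS k kX) j).
Qed.

Lemma coverage_subset (X X' : {fset K}) :
  {subset X' <= S} -> X `<=` X' -> coverage X <= coverage X'.
Proof.
move=> sX'S sXX'; apply: ler_sum => j _; rewrite ler_wpM2l // lerD2l lerN2.
by apply: prod_fset_subset => // k /sX'S/q01.
Qed.

Lemma coverage_gain (X : {fset K}) k : k \notin X ->
  coverage (k |` X) - coverage X =
  \sum_(j : I) d j * ((1 - q k j) * \prod_(r <- X) q r j).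
Proof.
move=> kX; rewrite -sumrB; apply: eq_bigr => j _.
by rewrite big_fsetU1 //=; ring.
Qed.

Lemma coverage_submodular (X X' : {fset K}) k :
  {subset X' <= S} -> X `<=` X' -> S k -> k \notin X' ->
  coverage (k |` X') - coverage X' <= coverage (k |` X) - coverage X.
Proof.
move=> sX'S sXX' Sk kX'.
have kX : k \notin X by apply: contra kX'; apply: (fsubsetP sXX').
rewrite !coverage_gain //; apply: ler_sum => j _; rewrite ler_wpM2l //.
have /andP[_ q1] := q01 Sk j; rewrite ler_wpM2l ?subr_ge0 //.
by apply: prod_fset_subset => // r /sX'S/q01.
Qed.

End Coverage.

Section PathProbability.
Variables (R : realFieldType) (T : finType) (w : T -> T -> R) (rho : seq T).

Lemma sum_prob : \sum_(b : outcome rho) prob w b = 1.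
Proof.
rewrite /prob -(bigA_distr_bigA
  (fun (i : 'I_(plen rho)) (c : bool) => if c then wedge w rho i else 1 - wedge w rho i)).
by apply: big1 => i _; rewrite big_bool /= addrC subrK.
Qed.

Hypothesis wedge01 : forall i : 'I_(plen rho), 0 <= wedge w rho i <= 1.

Lemma prob_ge0 (b : outcome rho) : 0 <= prob w b.
Proof.
apply: prodr_ge0 => i _; have /andP[p0 p1] := wedge01 i.
by case: (b i); rewrite ?subr_ge0.
Qed.

Lemma Expect_01 (f : outcome rho -> bool) : 0 <= Expect w f <= 1.
Proof.
apply/andP; split.
  by apply: sumr_ge0 => b _; rewrite mulr_ge0 ?prob_ge0.
rewrite -sum_prob ler_sum // => b _.
by case: (f b); rewrite ?mulr1 ?mulr0 ?prob_ge0.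
Qed.

End PathProbability.

Lemma wedge_path_01 (R : realFieldType) (T : finType) (e : rel T)
    (w : T -> T -> R) (rho : seq T) :
  edge_weights e w -> is_path e rho ->
  forall i : 'I_(plen rho), 0 <= wedge w rho i <= 1.
Proof.
case: rho => [|x s] // w01 /= xs i.
have /w01[/andP[w0 w1] _] := pathP x xs i (ltn_ord i).
by rewrite ltW.
Qed.

Theorem lemma1 (R : realFieldType) (T : finType) (e : rel T)
  (w : T -> T -> R) (vs vt : T) (ps : R) (d : T -> R) :
  simple_graph e -> edge_weights e w ->
  0 < ps <= 1 ->
  (exists rho, feasible w e vs vt ps rho) ->
  (forall j, 0 < d j) ->
  let Xf := feasible w e vs vt ps in
  [/\ J w d fset0 = 0,
      (forall X : {fset seq T}, {subset X <= Xf} -> 0 <= J w d X),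
      (forall X X' : {fset seq T}, {subset X' <= Xf} -> X `<=` X' ->
         J w d X <= J w d X')
    & (forall (X X' : {fset seq T}) (rho : seq T),
         {subset X' <= Xf} -> X `<=` X' -> Xf rho -> rho \notin X' ->
         J w d (rho |` X') - J w d X' <= J w d (rho |` X) - J w d X)].
Proof.
move=> _ w01 _ _ d_gt0 Xf.
have d_ge0 j : 0 <= d j by apply: ltW.
have miss01 : {in Xf, forall rho j, 0 <= 1 - Ez w j rho <= 1}.
  move=> rho /and3P[path_rho _ _] j.
  have /andP[E0 E1] := Expect_01 (wedge_path_01 w01 path_rho) (z_var j).
  by rewrite subr_ge0 E1 gerBl.
have -> : J w d = coverage d (fun rho j => 1 - Ez w j rho) by [].
split.
- exact: coverage_fset0.
- exact: coverage_ge0 miss01.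
- exact: coverage_subset miss01.
- exact: coverage_submodular miss01.
Qed.
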